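(* Suppose assumptions (i), (ii), (iv) hold. There is a number $\lambda^*$ such that, if $\lambda \geq \lambda^*$, all trajectories of the system $$\begin{aligned} \dot\varrho &= 0,\qquad \dot w = s(\varrho,w),\qquad \dot z = f_0(\varrho,w,z),\\ \dot\chi &= (A-KC)\chi + b\,\beta^T(X,\chi_1+\tau_1)\tilde\theta + \Delta(\chi_1,\tau_1,\theta) + \varphi(\varrho,w,z),\\ \dot{\tilde\theta} &= -\beta(X,\chi_1+\tau_1)\chi_1 - \mathrm{dzv}_\ell(\tilde\theta+\theta(\varrho)),\\ \dot X &= FX + G\,\Omega(\chi_1+\tau_1), \end{aligned}$$ with initial conditions $(\varrho,w,z)\in \mathbf{Z}=P\times W\times Z$, are bounded.
   Context: Plant: $\dot z = f_0(\varrho,w,z)+f_1(\varrho,w,z,e)e$, $\dot e = q(\varrho,w,z,e)+u$, with $z\in\mathbb{R}^n$, $e,u\in\mathbb{R}$, driven by the exosystem $\dot\varrho=0$, $\dot w = s(\varrho,w)$; all functions $C^1$; $P\subset\mathbb{R}^p$, $W\subset\mathbb{R}^s$, $Z\subset\mathbb{R}^n$ compact. Set $\mathbf{z}=\mathrm{col}(\varrho,w,z)$, $\mathbf{f}_0(\mathbf{z})=\mathrm{col}(0,s(\varrho,w),f_0(\varrho,w,z))$, $c(\mathbf{z}) = -q(\varrho,w,z,0)$, $\mathbf{Z}=P\times W\times Z$. Assumption (i): $P\times W$ is a differential submanifold with boundary of $\mathbb{R}^p\times\mathbb{R}^s$, invariant for the exosystem. Assumption (ii): there is a compact $\mathcal{Z}\subset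 P\times W\times\mathbb{R}^n$ containing the positive orbit of $\mathbf{Z}$ under $\dot{\mathbf{z}}=\mathbf{f}_0(\mathbf{z})$; the $\omega$-limit set $\mathcal{A}_0=\omega(\mathbf{Z})$ is a differential submanifold with boundary; and there is $d_1>0$ such that $\mathbf{z}\in P\times W\times\mathbb{R}^n$, $\mathrm{dist}(\mathbf{z},\mathcal{A}_0)\le d_1$ imply $\mathbf{z}\in\mathbf{Z}$. Assumption (iv): there exist an integer $d$, a $C^1$ map $\tau:\mathcal{Z}\to\mathbb{R}^d$, a $C^0$ map $\theta:P\to\mathbb{R}^q$, the observable pair $(A,C)$ with $A$ the $d\times d$ upper shift matrix (ones on the superdiagonal, zeros elsewhere) and $C=(1\ 0\ \cdots\ 0)$, and $C^1$ maps $\phi:\mathbb{R}\to\mathbb{R}^d$, $\Omega:\mathbb{R}\to\mathbb{R}^{d\times q}$ (which may be taken with compact support, hence globally Lipschitz) such that $\frac{\partial\tau}{\partial\mathbf{z}}\mathbf{f}_0(\mathbf{z}) = A\tau(\mathbf{z})+\phi(C\tau(\mathbf{z}))+\Omega(C\tau(\mathbf{z}))\theta(\varrho)$ and $c(\mathbf{z})=C\tau(\mathbf{z})$ for all $\mathbf{z}\in\mathcal{A}_0$. Design quantities: $b=\mathrm{col}(1,b_2,\dots,b_d)$ where $\lambda^{d-1}+b_2\lambda^{d-2}+\dots+b_d$ has $d-1$ distinct roots with negative real part; $F$ is the $(d-1)\times(d-1)$ matrix with first column $-\mathrm{col}(b_2,\dots,b_d)$ plus ones on the superdiagonal (Hurwitz);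 $G=(-\mathrm{col}(b_2,\dots,b_d)\ \ I_{d-1})$ is $(d-1)\times d$; $X$ is $(d-1)\times q$, $M(X)=\mathrm{col}(0,X)$; $\beta(X,\xi_1)=[CAM(X)+C\Omega(\xi_1)]^T$; $K=Ab+\lambda b$ with $\lambda>0$; $\mathrm{dzv}_\ell$ applies componentwise a $C^1$ dead zone $\mathrm{dz}_\ell(x)$ equal to $0$ for $|x|\le\ell$ and to $x$ for $|x|\ge\ell+1$, with $\ell>\max_{\varrho\in P}|\theta(\varrho)|$. The system above is the zero dynamics (for output $e$) of the plant in closed loop with the controller $u=\xi_1+v$, $\dot\xi = A\xi+\phi(\xi_1)+\Omega(\xi_1)\hat\theta+H(X,\xi_1)v-M(X)\mathrm{dzv}_\ell(\hat\theta)$, $\dot{\hat\theta}=\beta(X,\xi_1)v-\mathrm{dzv}_\ell(\hat\theta)$, $\dot X=FX+G\Omega(\xi_1)$, $H=M(X)\beta+K$, written in coordinates $\tilde\theta=\hat\theta-\theta(\varrho)$, $\eta=\xi-M(X)\tilde\theta$, $\chi=\eta-\tau(\varrho,w,z)$; here $\tau_1$ is the first component of $\tau(\varrho,w,z)$, $\Delta(\chi_1,\tau_1,\theta)=\phi(\chi_1+\tau_1)-\phi(\chi_1)+[\Omega(\chi_1+\tau_1)-\Omega(\chi_1)]\theta(\varrho)$, and $\varphi(\varrho,w,z)=K(c-\tau_1)+A\tau+\phi(\tau_1)+\Omega(\tau_1)\theta(\varrho)-\frac{\partial\tau}{\partial z}f_0-\frac{\partial\tau}{\partial w}s$, which vanishes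 on $\mathcal{A}_0$. *)

From HB Require Import structures.
From mathcomp Require Import all_boot all_order all_algebra.
From mathcomp Require Import all_classical all_reals all_analysis.
From mathcomp Require Import complex.
Set Implicit Arguments. Unset Strict Implicit. Unset Printing Implicit Defensive.
Import Order.TTheory GRing.Theory Num.Theory.
Import numFieldNormedType.Exports.
Local Open Scope classical_set_scope.
Local Open Scope ring_scope.

Section Defs.
Variable R : realType.

(* C^1 on an open set U: differentiable at every point of U, and the
   derivative x |-> 'd f x is continuous on U (tested on every direction v,
   which in finite dimension is continuity of the derivative). *)
Definition C1_on {V W : normedModType R} (U : set V) (f : V -> W) : Prop :=
  (forall x, U x -> differentiable f x) /\
  (forall v x, U x -> {for x, continuous (fun y => 'd f y v)}).

Definition C1 {V W : normedModType R} (f : V -> W) : Prop := C1_on setT f.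

Definition open_itv (a b : \bar R) : set R := [set t | (a < t%:E < b)%E].

Definition is_solution {V : normedModType R} (F : V -> V) (I : set R)
  (x : R -> V) : Prop :=
  forall t, I t -> derivable x t 1 /\ 'D_1 x t = F (x t).

Definition invariant_set {V : normedModType R} (F : V -> V) (S : set V) : Prop :=
  forall (a b : \bar R) (x : R -> V), (a < 0 < b)%E ->
    is_solution F (open_itv a b) x -> S (x 0) ->
    forall t, open_itv a b t -> S (x t).

Definition pos_orbit_in {V : normedModType R} (F : V -> V) (S K : set V) :
  Prop :=
  forall (a b : \bar R) (x : R -> V), (a < 0 < b)%E ->
    is_solution F (open_itv a b) x -> S (x 0) ->
    forall t, 0 <= t -> (t%:E < b)%E -> K (x t).

Definition omega_limit {V : normedModType R} (F : V -> V) (S : set V) :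
  set V :=
  [set y | exists (x : nat -> R -> V) (t : nat -> R),
     (forall k, S (x k 0) /\
        exists a : R, a < 0 /\ is_solution F [set u | a < u] (x k)) /\
     (t @ \oo --> +oo) /\
     ((fun k => x k (t k)) @ \oo --> y)].

Definition half_space (N k : nat) : set 'cV[R]_N :=
  [set y | (forall i : 'I_N, (k <= i)%N -> y i 0 = 0) /\
           (forall i : 'I_N, (i.+1 = k)%N -> 0 <= y i 0)].

Definition submanifold_wb (N : nat) (M : set 'cV[R]_N) : Prop :=
  forall x, M x -> exists (k : nat) (U V : set 'cV[R]_N)
    (psi psiinv : 'cV[R]_N -> 'cV[R]_N),
    [/\ (k <= N)%N, open U, open V, U x &
    [/\ forall u, U u -> V (psi u) /\ psiinv (psi u) = u,
        forall v, V v -> U (psiinv v) /\ psi (psiinv v) = v,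
        C1_on U psi, C1_on V psiinv &
        forall u, U u -> (M u <-> @half_space N k (psi u))]].

Definition dist_le {V : normedModType R} (x : V) (A : set V) (d : R) : Prop :=
  forall e, 0 < e -> exists2 a, A a & `|x - a| < d + e.

Definition rho_of {p sw n : nat} (x : 'cV[R]_(p + sw + n)) : 'cV[R]_p :=
  usubmx (usubmx x).
Definition w_of {p sw n : nat} (x : 'cV[R]_(p + sw + n)) : 'cV[R]_sw :=
  dsubmx (usubmx x).
Definition z_of {p sw n : nat} (x : 'cV[R]_(p + sw + n)) : 'cV[R]_n :=
  dsubmx x.

Definition f0bold {p sw n : nat} (s : 'cV[R]_p -> 'cV[R]_sw -> 'cV[R]_sw)
  (f0 : 'cV[R]_p -> 'cV[R]_sw -> 'cV[R]_n -> 'cV[R]_n)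
  (x : 'cV[R]_(p + sw + n)) : 'cV[R]_(p + sw + n) :=
  col_mx (col_mx 0 (s (rho_of x) (w_of x))) (f0 (rho_of x) (w_of x) (z_of x)).

(* ---------- design matrices (d = m.+1) ---------- *)
Definition Ash (m : nat) : 'M[R]_m.+1 := \matrix_(i, j) ((j : nat) == i.+1)%:R.
Definition Crow (m : nat) : 'rV[R]_m.+1 := \row_j ((j : nat) == 0%N)%:R.
Definition first (m : nat) (v : 'cV[R]_m.+1) : R := (Crow m *m v) 0 0.
(* b = col(1, b_2, ..., b_d), with bt = col(b_2, ..., b_d) *)
Definition bvec (m : nat) (bt : 'cV[R]_m) : 'cV[R]_m.+1 := col_mx (1 : 'M[R]_1) bt.
Definition bpoly (m : nat) (bt : 'cV[R]_m) : {poly R} :=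
  'X^m + \sum_(i < m) (bt i 0)%:P * 'X^(m - i.+1).
Definition Fmat (m : nat) (bt : 'cV[R]_m) : 'M[R]_m :=
  \matrix_(i, j) (if (j : nat) == 0%N then - bt i 0 else ((j : nat) == i.+1)%:R).
Definition Gmat (m : nat) (bt : 'cV[R]_m) : 'M[R]_(m, m.+1) := row_mx (- bt) (1%:M : 'M[R]_m).
Definition Mmat (m q : nat) (X : 'M[R]_(m, q)) : 'M[R]_(m.+1, q) := col_mx (0 : 'M[R]_(1, q)) X.
Definition beta (m q : nat) (Om : R -> 'M[R]_(m.+1, q)) (X : 'M[R]_(m, q))
  (xi1 : R) : 'cV[R]_q :=
  (Crow m *m Ash m *m Mmat X + Crow m *m Om xi1)^T.
Definition Kvec (m : nat) (bt : 'cV[R]_m) (lam : R) : 'cV[R]_m.+1 :=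
  Ash m *m bvec bt + lam *: bvec bt.
Definition dzv (q : nat) (dz : R -> R) (v : 'cV[R]_q) : 'cV[R]_q := map_mx dz v.

Definition eucl (q : nat) (v : 'cV[R]_q) : R := Num.sqrt (\sum_i v i 0 ^+ 2).

(* state of the closed loop: ((bold z, chi), (theta~, X)) *)
Definition cl_state (p sw n m q : nat) : Type :=
  ('cV[R]_(p + sw + n) * 'cV[R]_m.+1) * ('cV[R]_q * 'M[R]_(m, q)).

Definition cl_field (p sw n m q : nat)
  (s : 'cV[R]_p -> 'cV[R]_sw -> 'cV[R]_sw)
  (f0 : 'cV[R]_p -> 'cV[R]_sw -> 'cV[R]_n -> 'cV[R]_n)
  (c : 'cV[R]_(p + sw + n) -> R)
  (tau : 'cV[R]_(p + sw + n) -> 'cV[R]_m.+1)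
  (theta : 'cV[R]_p -> 'cV[R]_q)
  (phi : R -> 'cV[R]_m.+1) (Om : R -> 'M[R]_(m.+1, q))
  (bt : 'cV[R]_m) (lam : R) (dz : R -> R)
  (st : cl_state p sw n m q) : cl_state p sw n m q :=
  let: ((x, chi), (tht, X)) := st in
  let A := Ash m in let C := Crow m in
  let b := bvec bt in let K := Kvec bt lam in
  let tau1 := first (tau x) in
  let chi1 := first chi in
  let th := theta (rho_of x) in
  let bet := beta Om X (chi1 + tau1) in
  let Delta := phi (chi1 + tau1) - phi chi1 + (Om (chi1 + tau1) - Om chi1) *m th in
  let varphi := (c x - tau1) *: K + A *m tau x + phi tau1 + Om tau1 *m th
                - 'd tau x (f0bold s f0 x) in
  ((f0bold s f0 x,
    (A - K *m C) *m chi + b *m (bet^T *m tht) + Delta + varphi),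
   (- (chi1 *: bet) - dzv dz (tht + th),
    Fmat bt *m X + Gmat bt *m Om (chi1 + tau1))).

End Defs.

From HB Require Import structures.
From mathcomp Require Import all_boot all_order all_algebra.
From mathcomp Require Import all_classical all_reals all_analysis.
From mathcomp Require Import complex.
From mathcomp Require Import ring lra.
Import Order.TTheory GRing.Theory Num.Theory Num.Def.
Import numFieldNormedType.Exports.
Local Open Scope classical_set_scope.
Local Open Scope ring_scope.

(* The zero dynamics z does not see the controller, so z stays in the compact
   set Zc and every signal depending only on z is bounded; phi and Omega have
   compact support, hence are bounded as well.  The filter state X obeys
   X' = F X + bounded input with F a companion matrix whose eigenvalues are
   distinct with negative real part: each left eigenvector gives a stable
   scalar mode, and the Vandermonde matrix of the eigenvalues recovers X, so X
   is bounded.  In the coordinates eta = chi + tau(z) one has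
   eta' = (A - K C) eta + b u + E with u = beta^T theta~ and E bounded; since
   G b = 0 and G (A - K C) = F G, zeta = G eta again satisfies a stable
   companion system, so it is bounded.  Finally V = eta_1^2 + |theta~|^2
   satisfies V' <= -V + C: the adaptation law cancels the cross term
   eta_1 beta^T theta~, and the dead zone bounds what remains.  Hence eta_1 and
   theta~ are bounded, and eta is recovered from eta_1 and zeta. *)

Set Implicit Arguments. Unset Strict Implicit. Unset Printing Implicit Defensive.

Section Derivatives.
Variable R : realType.

Lemma is_derive_linear_comp (V W : normedModType R) (L : V -> W) (f : R -> V) t :
  {morph L : u v / u - v} -> (forall (k : R) u, L (k *: u) = k *: L u) ->
  continuous L -> derivable f t 1 -> is_derive t 1 (L \o f) (L ('D_1 f t)).
Proof.
move=> LB LZ Lc df.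
have quotient_eq : (fun h : R => h^-1 *: ((L \o f \o shift t) (h *: 1) - (L \o f) t)) =
    L \o (fun h : R => h^-1 *: ((f \o shift t) (h *: 1) - f t)).
  by apply: funext => h /=; rewrite LZ LB.
have cvL : (L \o (fun h : R => h^-1 *: ((f \o shift t) (h *: 1) - f t))) @ 0^' -->
    L ('D_1 f t) by apply: cvg_comp; [exact: df | exact: Lc].
split; first by rewrite /derivable quotient_eq; apply/cvg_ex; exists (L ('D_1 f t)).
by rewrite /derive quotient_eq; apply/cvg_lim.
Qed.

Lemma is_derive_fst (U V : normedModType R) (f : R -> U * V) (t : R) df :
  is_derive t 1 f df -> is_derive t 1 (fun s => (f s).1) df.1.
Proof.
move=> [df_ex <-]; apply: (is_derive_linear_comp (L := fst)) => // x.
by apply: cvg_fst; exact: cvg_id.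
Qed.

Lemma is_derive_snd (U V : normedModType R) (f : R -> U * V) (t : R) df :
  is_derive t 1 f df -> is_derive t 1 (fun s => (f s).2) df.2.
Proof.
move=> [df_ex <-]; apply: (is_derive_linear_comp (L := snd)) => // x.
by apply: cvg_snd; exact: cvg_id.
Qed.

Lemma is_derive_mx_entry m n (Y : R -> 'M[R]_(m, n)) (t : R) dY i j :
  is_derive t 1 Y dY -> is_derive t 1 (fun s => Y s i j) (dY i j).
Proof.
move=> [dY_ex <-]; split; first by move/derivable_mxP: dY_ex; apply.
by rewrite (derive_mx dY_ex) mxE.
Qed.

Lemma is_derive_mulmx m n k (M : 'M[R]_(m, n)) (Y : R -> 'M[R]_(n, k)) (t : R) dY :
  is_derive t 1 Y dY -> is_derive t 1 (fun s => M *m Y s) (M *m dY).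
Proof.
move=> dYt.
have entries i j : is_derive t 1 (fun s => (M *m Y s) i j) ((M *m dY) i j).
  have -> : (fun s => (M *m Y s) i j) = \sum_l (fun s => M i l * Y s l j).
    by apply: funext => s; rewrite mxE fct_sumE.
  rewrite mxE; apply: is_derive_sum => l.
  exact: is_deriveZ (is_derive_mx_entry l j dYt).
have dMY : derivable (fun s => M *m Y s) t 1.
  by apply/derivable_mxP => i j; apply: ex_derive; exact: entries.
split => //; rewrite (derive_mx dMY); apply/matrixP => i j.
by rewrite mxE; have [_ ->] := entries i j.
Qed.

Lemma is_derive_diff_comp (V W : normedModType R) (f : V -> W) (z : R -> V) t :
  derivable z t 1 -> differentiable f (z t) ->
  is_derive t 1 (f \o z) ('d f (z t) ('D_1 z t)).
Proof.
move=> dz df.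
have dz' : differentiable z t by apply/derivable1_diffP.
have dfz : differentiable (f \o z) t by apply: differentiable_comp.
split; first by apply/derivable1_diffP.
by rewrite deriveE // diff_comp // [in RHS]deriveE.
Qed.

Lemma is_derive_expRM (k s : R) :
  is_derive s 1 (fun u => expR (k * u)) (k * expR (k * s)).
Proof.
have lin : is_derive s 1 (fun u : R => k * u) k.
  exact: is_derive_eq (is_deriveZ k (is_derive_id s 1)) (mulr1 k).
have dc : derivable (expR \o (fun u => k * u)) s 1.
  apply/derivable1_diffP; apply: differentiable_comp.
    by apply/derivable1_diffP; case: lin.
  by apply/derivable1_diffP; exact: derivable_expR.
split; first exact: dc.
rewrite -derive1E derive1_comp; [|by case: lin|exact: derivable_expR].
have [_ dlin] := lin.
by rewrite !derive1E derive_val dlin mulrC.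
Qed.

End Derivatives.

Section Comparison.
Variable R : realType.

Lemma derive_decay_le_max (f : R -> R) (b : \bar R) (k C : R) : 0 < k ->
  (forall t, 0 <= t -> (t%:E < b)%E ->
     derivable f t 1 /\ 'D_1 f t <= - k * f t + C) ->
  forall t, 0 <= t -> (t%:E < b)%E -> f t <= maxr (f 0) (C / k).
Proof.
move=> k_gt0 hf t t_ge0 tb.
have hfs s : 0 <= s -> s <= t -> derivable f s 1 /\ 'D_1 f s <= - k * f s + C.
  by move=> s0 st; apply: hf => //; apply: le_lt_trans tb; rewrite lee_fin.
pose g s := expR (k * s) * (f s - C / k).
have dg s : 0 <= s -> s <= t ->
    is_derive s 1 g (expR (k * s) * ('D_1 f s + k * f s - C)).
  move=> s0 st; have [dfs _] := hfs s s0 st.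
  apply: is_derive_eq.
    exact: is_deriveM (is_derive_expRM k s)
      (is_deriveB (derivableP dfs) (is_derive_cst (C / k) s 1)).
  rewrite -[(f - _) s]/(f s - C / k) /GRing.scale /=; field; exact: lt0r_neq0.
have g_nincr : g t <= g 0.
  apply: (ler0_derive1_le_cc (a := 0) (b := t)).
  - by move=> u; rewrite in_itv /= => /andP[u0 ut]; case: (dg u (ltW u0) (ltW ut)).
  - move=> u; rewrite in_itv /= derive1E => /andP[u0 ut].
    have [_ ->] := dg u (ltW u0) (ltW ut).
    rewrite pmulr_rle0 ?expR_gt0 //; have [_ h] := hfs u (ltW u0) (ltW ut); lra.
  - apply: derivable_within_continuous => u; rewrite in_itv /= => /andP[u0 ut].
    by case: (dg u u0 ut).
  - by rewrite in_itv /= lexx t_ge0.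
  - by rewrite in_itv /= lexx t_ge0.
  - exact: t_ge0.
have [ft_le|ft_gt] := lerP (f t) (C / k); first by rewrite le_max ft_le orbT.
rewrite le_max; apply/orP; left.
have e_ge1 : 1 <= expR (k * t) by rewrite -expR0 ler_expR mulr_ge0 // ltW.
have : f t - C / k <= expR (k * t) * (f t - C / k) by rewrite ler_peMl // subr_ge0 ltW.
by move: g_nincr; rewrite /g mulr0 expR0 mul1r; lra.
Qed.

End Comparison.

Section Bounds.
Variable R : realType.

Lemma mx_entry_norm_le m n (A : 'M[R]_(m, n)) i j : `|A i j| <= `|A|.
Proof.
rewrite [leRHS]/Num.Def.normr /= mx_normrE.
by apply/bigmax_geP; right => /=; exists (i, j).
Qed.

Lemma mx_norm_le_entries m n (A : 'M[R]_(m, n)) M : 0 <= M ->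
  (forall i j, `|A i j| <= M) -> `|A| <= M.
Proof.
move=> M_ge0 hA; rewrite [leLHS]/Num.Def.normr /= mx_normrE.
by apply: bigmax_le => // -[i j] _; exact: hA.
Qed.

Lemma mulmx_norm_le m n k (A : 'M[R]_(m, n)) (B : 'M[R]_(n, k)) :
  `|A *m B| <= n%:R * (`|A| * `|B|).
Proof.
apply: mx_norm_le_entries => [|i j]; first by rewrite !mulr_ge0.
rewrite mxE; apply: le_trans (ler_norm_sum _ _ _) _.
rewrite mulr_natl -[n in _ *+ n]card_ord -sumr_const; apply: ler_sum => l _.
by rewrite normrM ler_pM // mx_entry_norm_le.
Qed.

Lemma mulmx_norm_le_bounds k1 k2 k3 (A : 'M[R]_(k1, k2)) (B : 'M[R]_(k2, k3)) MA MB :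
  `|A| <= MA -> `|B| <= MB -> `|A *m B| <= k2%:R * (MA * MB).
Proof.
move=> A_le B_le; apply: le_trans (mulmx_norm_le _ _) _.
by rewrite ler_wpM2l // ler_pM.
Qed.

Lemma trmx_norm_le m n (A : 'M[R]_(m, n)) : `|A^T| <= `|A|.
Proof. by apply: mx_norm_le_entries => // i j; rewrite mxE mx_entry_norm_le. Qed.

Lemma col_mx0_norm_le m n k (A : 'M[R]_(n, k)) : `|col_mx (0 : 'M[R]_(m, k)) A| <= `|A|.
Proof.
apply: mx_norm_le_entries => // i j.
case: (splitP i) => i' ei.
  have -> : i = lshift n i' by apply: val_inj.
  by rewrite col_mxEu mxE normr0.
have -> : i = rshift m i' by apply: val_inj.
by rewrite col_mxEd mx_entry_norm_le.
Qed.

Lemma prod_norm_le (U V : normedModType R) (x : U * V) M :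
  `|x.1| <= M -> `|x.2| <= M -> `|x| <= M.
Proof. by move=> h1 h2; rewrite prod_normE /= ge_max h1 h2. Qed.

Lemma nonexpansive_continuous (V W : normedModType R) (f : V -> W) :
  (forall u v, `|f u - f v| <= `|u - v|) -> continuous f.
Proof.
move=> hf x; apply/cvgrPdist_lt => e e_gt0.
near=> y; apply: le_lt_trans (hf x y) _.
by near: y; exact: cvgr_dist_lt.
Unshelve. all: by end_near.
Qed.

Lemma continuous_col_mx0 m n : continuous (fun v : 'cV[R]_m => col_mx v (0 : 'cV[R]_n)).
Proof.
apply: nonexpansive_continuous => u v.
rewrite opp_col_mx add_col_mx subr0; apply: mx_norm_le_entries => // i j.
case: (splitP i) => i' ei.
  have -> : i = lshift n i' by apply: val_inj.
  by rewrite col_mxEu mx_entry_norm_le.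
have -> : i = rshift m i' by apply: val_inj.
by rewrite col_mxEd mxE normr0.
Qed.

Lemma compact_continuous_bounded (V W : normedModType R) (A : set V) (f : V -> W) :
  compact A -> {within A, continuous f} ->
  exists M, 0 <= M /\ forall v, A v -> `|f v| <= M.
Proof.
move=> cA cf; have /compact_bounded [M [_ hM]] := continuous_compact cf cA.
exists (maxr 0 (M + 1)); split => [|v Av]; first by rewrite le_max lexx.
rewrite le_max; apply/orP; right.
by apply: (hM (M + 1)); [rewrite ltrDl ltr01 | exists v].
Qed.

Lemma compact_support_bounded (W : normedModType R) (f : R -> W) (M0 : R) :
  continuous f -> (forall y, M0 < `|y| -> f y = 0) -> exists M, forall y, `|f y| <= M.
Proof.
move=> cf supp.
have [M [M_ge0 hM]] := compact_continuous_bounded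
  (segment_compact (a := - `|M0|) (b := `|M0|)) (continuous_subspaceT cf).
exists M => y; have [y_le|y_gt] := lerP `|y| `|M0|.
  by apply: hM; rewrite /= in_itv /= -ler_norml.
by rewrite supp ?normr0 //; apply: le_lt_trans y_gt; exact: ler_norm.
Qed.

End Bounds.

Section Inequalities.
Variable R : realType.

Lemma young_mul2 (k x y : R) : 0 < k -> 2 * x * y <= k * x ^+ 2 + y ^+ 2 / k.
Proof.
move=> k_gt0; rewrite -subr_ge0.
have -> : k * x ^+ 2 + y ^+ 2 / k - 2 * x * y = (k * x - y) ^+ 2 / k.
  by field; exact: lt0r_neq0.
by rewrite divr_ge0 ?sqr_ge0 // ltW.
Qed.

Lemma normr_le1Dsqr (x : R) : `|x| <= 1 + x ^+ 2.
Proof. by have [x0|x0] := lerP 0 x; [rewrite ger0_norm|rewrite ltr0_norm]; nra. Qed.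

Lemma sqr_le_norm (x L : R) : `|x| <= L -> x ^+ 2 <= L ^+ 2.
Proof.
move=> hx; have L_ge0 : 0 <= L by apply: le_trans hx.
by move: hx; rewrite ler_norml => /andP[h1 h2]; nra.
Qed.

Lemma ler_sum_term (I : finType) (F : I -> R) i0 :
  (forall i, 0 <= F i) -> F i0 <= \sum_i F i.
Proof. by move=> F_ge0; rewrite (bigD1 i0) //= lerDl sumr_ge0. Qed.

(* The adaptation law is designed so that the cross terms [y * be^T th] cancel. *)
Lemma adaptive_cross_term_cancel q (lam y w tau1 : R) (be th d : 'I_q -> R) :
  2 * y * (- lam * y + w + \sum_k be k * th k) +
    \sum_k 2 * th k * (- ((y - tau1) * be k) - d k) =
  - 2 * lam * y ^+ 2 + 2 * y * w + \sum_k (2 * (tau1 * be k) * th k - 2 * th k * d k).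
Proof.
have -> : \sum_k (2 * (tau1 * be k) * th k - 2 * th k * d k) =
    \sum_k 2 * y * (be k * th k) + \sum_k 2 * th k * (- ((y - tau1) * be k) - d k).
  by rewrite -big_split /=; apply: eq_bigr => k _; ring.
by rewrite -mulr_sumr; ring.
Qed.

End Inequalities.

Section StableFocus.
Variable R : realType.

Lemma stable_focus_bounded (A B g1 g2 : R -> R) (al be L : R) (b : \bar R) :
  al < 0 ->
  (forall t, 0 <= t -> (t%:E < b)%E ->
    [/\ is_derive t 1 A (al * A t - be * B t + g1 t),
        is_derive t 1 B (al * B t + be * A t + g2 t),
        `|g1 t| <= L & `|g2 t| <= L]) ->
  exists M, forall t, 0 <= t -> (t%:E < b)%E -> `|A t| <= M /\ `|B t| <= M.
Proof.
move=> al_lt0 hAB; have k_gt0 : 0 < - al by rewrite oppr_gt0.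
pose N := A ^+ 2 + B ^+ 2.
have NE t : N t = A t ^+ 2 + B t ^+ 2 by rewrite /N !fctE.
have dN t : 0 <= t -> (t%:E < b)%E ->
    derivable N t 1 /\ 'D_1 N t <= - (- al) * N t + (L ^+ 2 + L ^+ 2) / (- al).
  move=> t0 tb; have [dA dB g1L g2L] := hAB t t0 tb.
  have dN : is_derive t 1 N (2 * al * N t + 2 * (A t * g1 t + B t * g2 t)).
    apply: is_derive_eq (is_deriveD (is_deriveX 2 dA) (is_deriveX 2 dB)) _.
    by rewrite NE /GRing.scale /=; ring.
  split; first by case: dN.
  rewrite derive_val.
  have y1 := young_mul2 (A t) (g1 t) k_gt0.
  have y2 := young_mul2 (B t) (g2 t) k_gt0.
  have e1 : g1 t ^+ 2 / - al <= L ^+ 2 / - al by rewrite ler_pM2r ?invr_gt0 ?sqr_le_norm.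
  have e2 : g2 t ^+ 2 / - al <= L ^+ 2 / - al by rewrite ler_pM2r ?invr_gt0 ?sqr_le_norm.
  rewrite mulrDl NE; lra.
pose M := 1 + maxr (N 0) ((L ^+ 2 + L ^+ 2) / - al / - al).
exists M => t t0 tb; have := derive_decay_le_max k_gt0 dN t0 tb.
have := normr_le1Dsqr (A t); have := normr_le1Dsqr (B t).
have := sqr_ge0 (A t); have := sqr_ge0 (B t).
rewrite /M !NE; split; lra.
Qed.

End StableFocus.

Section Companion.
Variable R : realType.

Lemma complex_Re_sum n (F : 'I_n -> R[i]) :
  complex.Re (\sum_i F i) = \sum_i complex.Re (F i).
Proof. exact: (raddf_sum (@complex.Re R : Rcomplex R -> R)). Qed.

Lemma complex_Im_sum n (F : 'I_n -> R[i]) :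
  complex.Im (\sum_i F i) = \sum_i complex.Im (F i).
Proof. exact: (raddf_sum (@complex.Im R : Rcomplex R -> R)). Qed.

Lemma complex_ReM (x y : R[i]) :
  complex.Re (x * y) = complex.Re x * complex.Re y - complex.Im x * complex.Im y.
Proof. by case: x y => [a b] [c d]. Qed.

Lemma complex_ImM (x y : R[i]) :
  complex.Im (x * y) = complex.Re x * complex.Im y + complex.Im x * complex.Re y.
Proof. by case: x y => [a b] [c d]. Qed.

Variables (m : nat) (bt : 'cV[R]_m).

Lemma bpoly_rootE (r : R[i]) : root (map_poly (real_complex R) (bpoly bt)) r ->
  r ^+ m + \sum_(i < m) (bt i 0)%:C%C * r ^+ (m - i.+1) = 0.
Proof.
move/rootP; rewrite /bpoly rmorphD /= rmorph_sum /= hornerD horner_sum.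
rewrite map_polyXn hornerXn => h; rewrite -[RHS]h; congr (_ + _); apply: eq_bigr => i _.
by rewrite rmorphM /= map_polyC map_polyXn hornerM hornerC hornerXn.
Qed.

(* [(r^(m-1), ..., r, 1)] is a left eigenvector of the companion matrix [Fmat bt]. *)
Lemma Fmat_left_eigen (r : R[i]) : root (map_poly (real_complex R) (bpoly bt)) r ->
  forall j : 'I_m,
  \sum_(i < m) r ^+ (m - i.+1) * (Fmat bt i j)%:C%C = r * r ^+ (m - j.+1).
Proof.
move=> /bpoly_rootE r_root j; have jm := ltn_ord j.
have [j0|j_neq0] := eqVneq (j : nat) 0.
  under eq_bigr do rewrite mxE j0 eqxx.
  have -> : r * r ^+ (m - j.+1) = r ^+ m.
    by rewrite j0 -exprS subn1 prednK // (leq_ltn_trans _ jm).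
  have -> : r ^+ m = - \sum_(i < m) (bt i 0)%:C%C * r ^+ (m - i.+1).
    by apply/eqP; rewrite -addr_eq0 r_root.
  by rewrite -sumrN; apply: eq_bigr => i _; rewrite rmorphN /= mulrN mulrC.
under eq_bigr do rewrite mxE (negbTE j_neq0).
have jp : (j.-1 < m)%N by rewrite (leq_ltn_trans _ jm) // leq_pred.
rewrite (bigD1 (Ordinal jp)) //= big1 ?addr0; last first.
  move=> i /eqP i_neq; have [e|] := eqVneq (j : nat) i.+1; last by rewrite mulr0.
  by case: i_neq; apply: val_inj => /=; rewrite e.
rewrite prednK ?lt0n // eqxx mulr1 -exprS.
by congr (_ ^+ _); rewrite -subSn // prednK ?lt0n // subSS.
Qed.

Definition mode_re (r : R[i]) : 'rV[R]_m := \row_i complex.Re (r ^+ (m - i.+1)).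
Definition mode_im (r : R[i]) : 'rV[R]_m := \row_i complex.Im (r ^+ (m - i.+1)).

Lemma mode_re_Fmat (r : R[i]) : root (map_poly (real_complex R) (bpoly bt)) r ->
  mode_re r *m Fmat bt = complex.Re r *: mode_re r - complex.Im r *: mode_im r.
Proof.
move=> r_root; apply/rowP => j; rewrite !mxE.
have := congr1 (@complex.Re R) (Fmat_left_eigen r_root j).
rewrite complex_Re_sum complex_ReM => <-; apply: eq_bigr => i _.
by rewrite !mxE complex_ReM /= mulr0 subr0.
Qed.

Lemma mode_im_Fmat (r : R[i]) : root (map_poly (real_complex R) (bpoly bt)) r ->
  mode_im r *m Fmat bt = complex.Re r *: mode_im r + complex.Im r *: mode_re r.
Proof.
move=> r_root; apply/rowP => j; rewrite !mxE.
have := congr1 (@complex.Im R) (Fmat_left_eigen r_root j).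
rewrite complex_Im_sum complex_ImM => <-; apply: eq_bigr => i _.
by rewrite !mxE complex_ImM /= mulr0 add0r.
Qed.

Lemma companion_mode_bounded k (r : R[i]) (b : \bar R) (Y g : R -> 'M[R]_(m, k)) Mg :
  root (map_poly (real_complex R) (bpoly bt)) r -> complex.Re r < 0 ->
  (forall t, 0 <= t -> (t%:E < b)%E -> is_derive t 1 Y (Fmat bt *m Y t + g t)) ->
  (forall t, 0 <= t -> (t%:E < b)%E -> `|g t| <= Mg) ->
  forall c, exists M, forall t, 0 <= t -> (t%:E < b)%E ->
    `|(mode_re r *m Y t) 0 c| <= M /\ `|(mode_im r *m Y t) 0 c| <= M.
Proof.
move=> r_root Re_lt0 dY gMg c.
pose L := m%:R * ((`|mode_re r| + `|mode_im r|) * Mg).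
apply: (stable_focus_bounded (A := fun t => (mode_re r *m Y t) 0 c)
  (B := fun t => (mode_im r *m Y t) 0 c) (g1 := fun t => (mode_re r *m g t) 0 c)
  (g2 := fun t => (mode_im r *m g t) 0 c) (be := complex.Im r) (L := L) Re_lt0) => t t0 tb.
have dmode (v : 'rV[R]_m) := is_derive_mx_entry 0 c (is_derive_mulmx v (dY t t0 tb)).
have g_le v : `|v| <= `|mode_re r| + `|mode_im r| -> `|(v *m g t) 0 c| <= L.
  move=> v_le; apply: le_trans (mx_entry_norm_le _ _ _) _.
  apply: le_trans (mulmx_norm_le _ _) _; rewrite ler_wpM2l // ler_pM //.
  exact: gMg.
split.
- apply: is_derive_eq (dmode (mode_re r)) _.
  by rewrite mulmxDr mulmxA (mode_re_Fmat r_root) mulmxBl -!scalemxAl !mxE.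
- apply: is_derive_eq (dmode (mode_im r)) _.
  by rewrite mulmxDr mulmxA (mode_im_Fmat r_root) mulmxDl -!scalemxAl !mxE.
- by apply: g_le; rewrite lerDl.
- by apply: g_le; rewrite lerDr.
Qed.

Lemma companion_system_bounded k (rs : seq R[i]) (b : \bar R) (Y g : R -> 'M[R]_(m, k)) :
  size rs = m -> uniq rs -> all (root (map_poly (real_complex R) (bpoly bt))) rs ->
  all (fun r => Re r < 0) rs ->
  (forall t, 0 <= t -> (t%:E < b)%E -> is_derive t 1 Y (Fmat bt *m Y t + g t)) ->
  (exists Mg, forall t, 0 <= t -> (t%:E < b)%E -> `|g t| <= Mg) ->
  exists M, forall t, 0 <= t -> (t%:E < b)%E -> `|Y t| <= M.
Proof.
move=> size_rs uniq_rs roots_rs Re_rs dY [Mg gMg].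
pose r (j : 'I_m) := rs`_j.
have r_in j : r j \in rs by rewrite mem_nth // size_rs.
have r_root j : root (map_poly (real_complex R) (bpoly bt)) (r j).
  by move/allP: roots_rs; apply.
have Re_r j : complex.Re (r j) < 0.
  by move/allP: Re_rs => /(_ _ (r_in j)); rewrite -complexRe ltcR.
have modes_bounded (jc : 'I_m * 'I_k) : exists M, forall t, 0 <= t -> (t%:E < b)%E ->
    `|(mode_re (r jc.1) *m Y t) 0 jc.2| <= M /\ `|(mode_im (r jc.1) *m Y t) 0 jc.2| <= M.
  exact: companion_mode_bounded (r_root jc.1) (Re_r jc.1) dY gMg jc.2.
have [Mf hMf] := choice modes_bounded.
pose V := (Vandermonde m (\row_j r j))^T.
have V_unit : V \in unitmx.
  rewrite unitmxE unitfE det_tr det_Vandermonde; apply/prodf_neq0 => i _.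
  apply/prodf_neq0 => j ij; rewrite !mxE subr_eq0 nth_uniq ?size_rs //.
  by rewrite neq_ltn ij orbT.
pose W := invmx V.
pose Mp jc := maxr 0 (Mf jc).
have Mp_ge0 jc : 0 <= Mp jc by rewrite le_max lexx.
have term_ge0 i c j : 0 <= (`|complex.Re (W i j)| + `|complex.Im (W i j)|) * Mp (j, c).
  by rewrite mulr_ge0 ?addr_ge0.
exists (\sum_i \sum_c \sum_j (`|complex.Re (W i j)| + `|complex.Im (W i j)|) * Mp (j, c)).
move=> t t0 tb; apply: mx_norm_le_entries => [|i0 c].
  by do 2!(apply: sumr_ge0 => ? _); apply: sumr_ge0.
pose u : 'cV[R[i]]_m := \col_i (Y t (rev_ord i) c)%:C%C.
have Vu j : (V *m u) j 0 = \sum_(l < m) r j ^+ (m - l.+1) * (Y t l c)%:C%C.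
  rewrite mxE (reindex_inj rev_ord_inj) /=; apply: eq_bigr => l _.
  by rewrite !mxE rev_ordK.
have Y_entry i : Y t (rev_ord i) c = \sum_j
    (complex.Re (W i j) * (mode_re (r j) *m Y t) 0 c
     - complex.Im (W i j) * (mode_im (r j) *m Y t) 0 c).
  have -> : Y t (rev_ord i) c = complex.Re ((W *m (V *m u)) i 0).
    by rewrite mulmxA mulVmx // mul1mx mxE.
  rewrite mxE complex_Re_sum; apply: eq_bigr => j _.
  rewrite complex_ReM Vu complex_Re_sum complex_Im_sum !mxE.
  congr (_ * _ - _ * _); apply: eq_bigr => l _;
    by rewrite !mxE ?complex_ReM ?complex_ImM /= mulr0 ?subr0 ?add0r.
rewrite -(rev_ordK i0) Y_entry.
apply: le_trans (ler_norm_sum _ _ _) _.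
apply: le_trans (ler_sum_term (rev_ord i0) _); last first.
  by move=> i; apply: sumr_ge0 => c' _; apply: sumr_ge0.
apply: le_trans (ler_sum_term c _); last by move=> c'; apply: sumr_ge0.
apply: ler_sum => j _; have [re_le im_le] := hMf (j, c) t t0 tb.
apply: le_trans (ler_normB _ _) _; rewrite !normrM mulrDl lerD // ler_wpM2l //.
- by apply: le_trans re_le _; rewrite le_max lexx orbT.
- by apply: le_trans im_le _; rewrite le_max lexx orbT.
Qed.

End Companion.

Section DesignMatrices.
Variables (R : realType) (m : nat) (bt : 'cV[R]_m).

Lemma firstE (v : 'cV[R]_m.+1) : first v = v 0 0.
Proof.
rewrite /first mxE big_ord_recl big1 ?addr0 => [|j _]; first by rewrite mxE mul1r.
by rewrite mxE mul0r.
Qed.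

Lemma bvec00 : bvec bt 0 0 = 1.
Proof.
rewrite /bvec mxE; case: splitP => [i _|i /= e]; first by rewrite ord1 mxE.
by move: e; rewrite add1n.
Qed.

Lemma mulmx_Crow (K v : 'cV[R]_m.+1) : K *m Crow R m *m v = first v *: K.
Proof. by rewrite -mulmxA [Crow R m *m v]mx11_scalar mul_mx_scalar. Qed.

Lemma Gmat_mulE (v : 'cV[R]_(1 + m)) : Gmat bt *m v = dsubmx v - bt *m usubmx v.
Proof.
have := mul_row_col (- bt) (1%:M : 'M[R]_m) (usubmx v) (dsubmx v).
by rewrite vsubmxK mul1mx mulNmx addrC => <-.
Qed.

Lemma Gmat_bvec : Gmat bt *m bvec bt = 0.
Proof. by rewrite Gmat_mulE /bvec col_mxKd col_mxKu mulmx1 subrr. Qed.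

Lemma cV_bvec_decomp (v : 'cV[R]_m.+1) :
  v = first v *: bvec bt + Mmat (Gmat bt *m v).
Proof.
apply/colP => i; rewrite Gmat_mulE firstE !mxE.
case: splitP => j i_j; rewrite !mxE.
  have -> : i = 0 by apply: val_inj; rewrite /= i_j (ord1 j).
  by rewrite (ord1 j) mulr1 addr0.
rewrite big_ord_recl big_ord0 addr0 mxE.
have -> : rshift 1 j = i by apply: val_inj.
have -> : lshift m (0 : 'I_1) = 0 by apply: val_inj.
by rewrite (mulrC (v 0 0)) addrC subrK.
Qed.

Lemma Mmat_norm_le k (X : 'M[R]_(m, k)) : `|Mmat X| <= `|X|.
Proof. exact: (@col_mx0_norm_le _ 1). Qed.

Lemma Ash_Mmat_entry (w : 'cV[R]_m) (k : 'I_m.+1) :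
  (Ash R m *m Mmat w) k 0 = \sum_(j < m) ((j : nat) == k)%:R * w j 0.
Proof.
rewrite mxE big_ord_recl mxE /= mul0r add0r; apply: eq_bigr => j _.
rewrite !mxE eqSS; congr (_ * _).
case: splitP => [l /= jl|l /= jl]; first by rewrite (ord1 l) in jl.
by congr (w _ 0); apply: val_inj; move: jl; rewrite /bump /= add1n => -[].
Qed.

Lemma Gmat_Ash_Mmat (w : 'cV[R]_m) : Gmat bt *m (Ash R m *m Mmat w) = Fmat bt *m w.
Proof.
apply/colP => i.
have x_d : dsubmx (Ash R m *m Mmat w : 'cV_(1 + m)) i 0 =
    \sum_(j < m) ((j : nat) == i.+1)%:R * w j 0.
  by rewrite [LHS]mxE Ash_Mmat_entry.
have x_u : usubmx (Ash R m *m Mmat w : 'cV_(1 + m)) 0 0 =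
    \sum_(j < m) ((j : nat) == 0)%:R * w j 0.
  by rewrite [LHS]mxE (_ : lshift m 0 = 0) ?Ash_Mmat_entry //; apply: val_inj.
rewrite Gmat_mulE [usubmx _]mx11_scalar mul_mx_scalar x_u mxE x_d !mxE.
rewrite mulr_suml -sumrB; apply: eq_bigr => j _; rewrite mxE.
by have [->|_] := eqVneq (j : nat) 0; rewrite ?mul1r ?mul0r ?subr0 // add0r mulrC mulNr.
Qed.

Lemma closed_loop_matrix_decomp (lam : R) (v : 'cV[R]_m.+1) :
  (Ash R m - Kvec bt lam *m Crow R m) *m v =
  Ash R m *m Mmat (Gmat bt *m v) - (lam * first v) *: bvec bt.
Proof.
rewrite mulmxBl mulmx_Crow /Kvec {1}(cV_bvec_decomp v) mulmxDr -scalemxAr.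
rewrite scalerDr scalerA mulrC; set Ab := first v *: _; set Mz := Ash R m *m _.
by rewrite opprD addrA [Ab + Mz]addrC addrK.
Qed.

Lemma Gmat_closed_loop (lam : R) (v e : 'cV[R]_m.+1) (w : 'M[R]_1) :
  Gmat bt *m ((Ash R m - Kvec bt lam *m Crow R m) *m v + bvec bt *m w + e) =
  Fmat bt *m (Gmat bt *m v) + Gmat bt *m e.
Proof.
have Gb_scaled (k : R) : Gmat bt *m (k *: bvec bt) = 0.
  by rewrite -mul_scalar_mx mulmxA mul_mx_scalar -scalemxAl Gmat_bvec scaler0.
rewrite !mulmxDr closed_loop_matrix_decomp mulmxBr Gmat_Ash_Mmat Gb_scaled.
rewrite [Gmat bt *m (bvec bt *m w)]mulmxA.
by rewrite Gmat_bvec mul0mx subr0 addr0.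
Qed.

Lemma first_closed_loop (lam : R) (v e : 'cV[R]_m.+1) (w : 'M[R]_1) :
  first ((Ash R m - Kvec bt lam *m Crow R m) *m v + bvec bt *m w + e) =
  - lam * first v + (first (Ash R m *m Mmat (Gmat bt *m v)) + first e) + w 0 0.
Proof.
rewrite closed_loop_matrix_decomp [w]mx11_scalar mul_mx_scalar !firstE.
move: bvec00; move: (bvec bt) (Ash R m *m _) => bb Ab bb00.
by rewrite !mxE bb00 eqxx mulr1n; ring.
Qed.

End DesignMatrices.

Section DeadZone.
Variables (R : realType) (dz : R -> R) (l Mdz : R).
Hypothesis dz_id : forall y, l + 1 <= `|y| -> dz y = y.
Hypothesis dz_bound : forall y, `|y| <= `|l| + 1 -> `|dz y| <= Mdz.

(* Outside the dead zone [- dz] damps [e]; inside it everything is bounded. *)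
Lemma dead_zone_dissipation (Ms Mp e s p : R) :
  0 <= Ms -> `|s| <= Ms -> `|p| <= Mp ->
  2 * s * e - 2 * e * dz (e + p) <=
    - e ^+ 2 + ((Ms + Mp) ^+ 2 + (`|l| + 1 + Mp) ^+ 2 + 2 * (`|l| + 1 + Mp) * (Ms + Mdz)).
Proof.
move=> Ms_ge0 s_le p_le; have Mp_ge0 : 0 <= Mp by apply: le_trans p_le.
have Mdz_ge0 : 0 <= Mdz.
  by apply: le_trans (normr_ge0 (dz 0)) (dz_bound _); rewrite normr0 addr_ge0.
set L := `|l| + 1 + Mp; have L_ge0 : 0 <= L by rewrite !addr_ge0.
have [dz_out|dz_in] := lerP (l + 1) `|e + p|.
  rewrite dz_id //.
  have /sqr_le_norm sp_le : `|s - p| <= Ms + Mp.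
    by apply: le_trans (ler_normB _ _) _; apply: lerD.
  have := sqr_ge0 (e - (s - p)); have := sqr_ge0 L.
  have : 0 <= 2 * L * (Ms + Mdz) by rewrite !mulr_ge0 ?addr_ge0.
  nra.
have ep_le : `|e + p| <= `|l| + 1.
  by apply: ltW; apply: lt_le_trans dz_in _; rewrite lerD2r ler_norm.
have e_le : `|e| <= L.
  by rewrite -(addrK p e); apply: le_trans (ler_normB _ _) _; exact: lerD.
have : `|s * e| <= Ms * L by rewrite normrM ler_pM.
have : `|e * dz (e + p)| <= L * Mdz by rewrite normrM ler_pM // dz_bound.
rewrite !ler_norml => /andP[b1 b1'] /andP[b2 b2'].
have := sqr_le_norm e_le; have := sqr_ge0 (Ms + Mp).
nra.
Qed.

End DeadZone.

Section ClosedLoopTrajectory.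
Variables (R : realType) (p sw n m q : nat).
Variables (s : 'cV[R]_p -> 'cV[R]_sw -> 'cV[R]_sw)
  (f0 : 'cV[R]_p -> 'cV[R]_sw -> 'cV[R]_n -> 'cV[R]_n)
  (c : 'cV[R]_(p + sw + n) -> R) (tau : 'cV[R]_(p + sw + n) -> 'cV[R]_m.+1)
  (theta : 'cV[R]_p -> 'cV[R]_q) (phi : R -> 'cV[R]_m.+1) (Om : R -> 'M[R]_(m.+1, q))
  (bt : 'cV[R]_m) (lam : R) (dz : R -> R).
Variables (a b : \bar R) (x : R -> cl_state R p sw n m q).
Hypothesis a_lt0_lt_b : (a < 0 < b)%E.
Hypothesis x_sol : is_solution (cl_field s f0 c tau theta phi Om bt lam dz) (open_itv a b) x.

Let zf t := (x t).1.1.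
Let chi t := (x t).1.2.
Let tht t := (x t).2.1.
Let Xf t := (x t).2.2.

Lemma fwd_open_itv t : 0 <= t -> (t%:E < b)%E -> open_itv a b t.
Proof.
move=> t_ge0 tb; rewrite /open_itv /= tb andbT.
by case/andP: a_lt0_lt_b => a_lt0 _; apply: lt_le_trans a_lt0 _; rewrite lee_fin.
Qed.

Lemma x_is_derive t : open_itv a b t ->
  is_derive t 1 x (cl_field s f0 c tau theta phi Om bt lam dz ((zf t, chi t), (tht t, Xf t))).
Proof.
move=> ht; have [dx Dx] := x_sol ht; split => //.
by rewrite Dx /zf /chi /tht /Xf; case: (x t) => [[? ?] [? ?]].
Qed.

Lemma z_solution : is_solution (f0bold s f0) (open_itv a b) zf.
Proof. by move=> t /x_is_derive/is_derive_fst/is_derive_fst[]. Qed.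

Let tau1 t := first (tau (zf t)).
Let chi1 t := first (chi t).
Let th t := theta (rho_of (zf t)).
Let bet t := beta Om (Xf t) (chi1 t + tau1 t).
Let u t := (bet t)^T *m tht t.
(* The part of [eta'] that stays bounded as long as [z] does. *)
Let E t := phi (chi1 t + tau1 t) - phi (chi1 t) + (Om (chi1 t + tau1 t) - Om (chi1 t)) *m th t
  + c (zf t) *: Kvec bt lam + phi (tau1 t) + Om (tau1 t) *m th t.
(* The paper's coordinates [eta], before the shift [chi = eta - tau]. *)
Let eta t := chi t + tau (zf t).
Let y t := eta t 0 0.
Let zeta t := Gmat bt *m eta t.

Lemma X_is_derive t : 0 <= t -> (t%:E < b)%E ->
  is_derive t 1 Xf (Fmat bt *m Xf t + Gmat bt *m Om (chi1 t + tau1 t)).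
Proof.
by move=> t0 tb; exact: is_derive_snd (is_derive_snd (x_is_derive (fwd_open_itv t0 tb))).
Qed.

Lemma tht_entry_is_derive t k : 0 <= t -> (t%:E < b)%E ->
  is_derive t 1 (fun s => tht s k 0) (- (chi1 t * bet t k 0) - dz (tht t k 0 + th t k 0)).
Proof.
move=> t0 tb; have := is_derive_fst (is_derive_snd (x_is_derive (fwd_open_itv t0 tb))).
by move/(is_derive_mx_entry k 0); rewrite /= !mxE.
Qed.

Hypothesis tau_diff : forall t, 0 <= t -> (t%:E < b)%E -> differentiable tau (zf t).

Lemma eta_is_derive t : 0 <= t -> (t%:E < b)%E ->
  is_derive t 1 eta ((Ash R m - Kvec bt lam *m Crow R m) *m eta t + bvec bt *m u t + E t).
Proof.
move=> t0 tb; have dx := x_is_derive (fwd_open_itv t0 tb).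
have [dz_ex Dz] := is_derive_fst (is_derive_fst dx).
have dtau := is_derive_diff_comp dz_ex (tau_diff t0 tb).
apply: is_derive_eq (is_deriveD (is_derive_snd (is_derive_fst dx)) dtau) _.
rewrite Dz /= mulmxDr !mulmxBl !mulmx_Crow.
rewrite /u /E /bet /tau1 /chi1 /th /zf mulmxBl.
by apply/matrixP => i j; rewrite !mxE; ring.
Qed.

Variables (l Mz Mta Mc Mth Mph MO Mdz : R) (rs : seq R[i]).
Hypothesis z_bound : forall t, 0 <= t -> (t%:E < b)%E -> `|zf t| <= Mz.
Hypothesis tau_bound : forall t, 0 <= t -> (t%:E < b)%E -> `|tau (zf t)| <= Mta.
Hypothesis c_bound : forall t, 0 <= t -> (t%:E < b)%E -> `|c (zf t)| <= Mc.
Hypothesis theta_bound : forall t, 0 <= t -> (t%:E < b)%E -> `|theta (rho_of (zf t))| <= Mth.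
Hypothesis phi_bound : forall v, `|phi v| <= Mph.
Hypothesis Om_bound : forall v, `|Om v| <= MO.
Hypothesis dz_id : forall v, l + 1 <= `|v| -> dz v = v.
Hypothesis dz_bound : forall v, `|v| <= `|l| + 1 -> `|dz v| <= Mdz.
Hypothesis lam_ge1 : 1 <= lam.
Hypotheses (size_rs : size rs = m) (uniq_rs : uniq rs)
  (roots_rs : all (root (map_poly (real_complex R) (bpoly bt))) rs)
  (Re_rs : all (fun r => Re r < 0) rs).

Lemma X_bounded : exists MX, forall t, 0 <= t -> (t%:E < b)%E -> `|Xf t| <= MX.
Proof.
apply: (companion_system_bounded size_rs uniq_rs roots_rs Re_rs X_is_derive).
by exists (m.+1%:R * (`|Gmat bt| * MO)) => t _ _; apply: mulmx_norm_le_bounds.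
Qed.

Lemma E_bounded : exists ME, forall t, 0 <= t -> (t%:E < b)%E -> `|E t| <= ME.
Proof.
exists (Mph + Mph + q%:R * ((MO + MO) * Mth) + Mc * `|Kvec bt lam|
        + Mph + q%:R * (MO * Mth)) => t t0 tb.
have th_le := theta_bound t0 tb.
have OmB_le v w : `|Om v - Om w| <= MO + MO by apply: le_trans (ler_normB _ _) _; apply: lerD.
have phiB_le v w : `|phi v - phi w| <= Mph + Mph.
  by apply: le_trans (ler_normB _ _) _; apply: lerD.
apply: le_trans (ler_normD _ _) _; apply: lerD; last exact: mulmx_norm_le_bounds.
apply: le_trans (ler_normD _ _) _; apply: lerD; last exact: phi_bound.
apply: le_trans (ler_normD _ _) _; apply: lerD; last by rewrite normrZ ler_wpM2r // c_bound.
apply: le_trans (ler_normD _ _) _; apply: lerD; [exact: phiB_le | exact: mulmx_norm_le_bounds].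
Qed.

Lemma beta_bounded : exists Mb, 0 <= Mb /\ forall t, 0 <= t -> (t%:E < b)%E -> `|bet t| <= Mb.
Proof.
have [MX X_le] := X_bounded.
pose Mb := m.+1%:R * (`|Crow R m *m Ash R m| * MX) + m.+1%:R * (`|Crow R m| * MO).
exists (maxr 0 Mb); split => [|t t0 tb]; first by rewrite le_max lexx.
rewrite le_max; apply/orP; right; rewrite /bet /beta.
apply: le_trans (trmx_norm_le _) _.
apply: le_trans (ler_normD _ _) _; apply: lerD; apply: mulmx_norm_le_bounds => //.
by apply: le_trans (Mmat_norm_le _) (X_le t t0 tb).
Qed.

Lemma zeta_bounded : exists Mze, forall t, 0 <= t -> (t%:E < b)%E -> `|zeta t| <= Mze.
Proof.
have [ME E_le] := E_bounded.
apply: (companion_system_bounded size_rs uniq_rs roots_rs Re_rs (g := fun t => Gmat bt *m E t)).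
  move=> t t0 tb; apply: is_derive_eq (is_derive_mulmx _ (eta_is_derive t0 tb)) _.
  exact: Gmat_closed_loop.
by exists (m.+1%:R * (`|Gmat bt| * ME)) => t t0 tb; apply: mulmx_norm_le_bounds => //; exact: E_le.
Qed.

Let V := y ^+ 2 + \sum_k (fun s => tht s k 0) ^+ 2.

Lemma VE t : V t = y t ^+ 2 + \sum_k tht t k 0 ^+ 2.
Proof. by rewrite /V addrfctE exprfctE fct_sumE. Qed.

Lemma y_is_derive t : 0 <= t -> (t%:E < b)%E ->
  is_derive t 1 y (- lam * y t + (first (Ash R m *m Mmat (zeta t)) + first (E t)) + u t 0 0).
Proof.
move=> t0 tb; apply: is_derive_eq (is_derive_mx_entry 0 0 (eta_is_derive t0 tb)) _.
by rewrite -firstE first_closed_loop firstE.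
Qed.

Lemma b_gt0 : (0%:E < b)%E.
Proof. by case/andP: a_lt0_lt_b. Qed.

Lemma w_bounded : exists Bw, forall t, 0 <= t -> (t%:E < b)%E ->
  `|first (Ash R m *m Mmat (zeta t)) + first (E t)| <= Bw.
Proof.
have [ME E_le] := E_bounded; have [Mze zeta_le] := zeta_bounded.
exists (m.+1%:R * (`|Ash R m| * Mze) + ME) => t t0 tb.
apply: le_trans (ler_normD _ _) _; rewrite !firstE; apply: lerD.
  apply: le_trans (mx_entry_norm_le _ _ _) _; apply: mulmx_norm_le_bounds => //.
  exact: le_trans (Mmat_norm_le _) (zeta_le t t0 tb).
exact: le_trans (mx_entry_norm_le _ _ _) (E_le t t0 tb).
Qed.

Lemma tht_dissipation : exists Cd, forall t, 0 <= t -> (t%:E < b)%E ->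
  \sum_k (2 * (tau1 t * bet t k 0) * tht t k 0 - 2 * tht t k 0 * dz (tht t k 0 + th t k 0))
  <= - \sum_k tht t k 0 ^+ 2 + q%:R * Cd.
Proof.
have [Mb [Mb_ge0 bet_le]] := beta_bounded.
have Mta_ge0 : 0 <= Mta := le_trans (normr_ge0 _) (tau_bound (lexx 0) b_gt0).
pose L := `|l| + 1 + Mth.
pose Cd := (Mta * Mb + Mth) ^+ 2 + L ^+ 2 + 2 * L * (Mta * Mb + Mdz).
exists Cd => t t0 tb.
have dz_k k : 2 * (tau1 t * bet t k 0) * tht t k 0 - 2 * tht t k 0 * dz (tht t k 0 + th t k 0)
    <= - tht t k 0 ^+ 2 + Cd.
  apply: (dead_zone_dissipation dz_id dz_bound); first exact: mulr_ge0.
    rewrite normrM; apply: ler_pM => //.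
      by rewrite /tau1 firstE; exact: le_trans (mx_entry_norm_le _ _ _) (tau_bound t0 tb).
    exact: le_trans (mx_entry_norm_le _ _ _) (bet_le t t0 tb).
  exact: le_trans (mx_entry_norm_le _ _ _) (theta_bound t0 tb).
apply: le_trans (ler_sum _ (fun k _ => dz_k k)) _.
by rewrite big_split /= sumrN sumr_const card_ord mulr_natl.
Qed.

Lemma V_dissipation : exists CV, forall t, 0 <= t -> (t%:E < b)%E ->
  derivable V t 1 /\ 'D_1 V t <= - 1 * V t + CV.
Proof.
have [Bw w_le] := w_bounded; have [Cd tht_le] := tht_dissipation.
exists (Bw ^+ 2 + q%:R * Cd) => t t0 tb.
pose w := first (Ash R m *m Mmat (zeta t)) + first (E t).
have dV : is_derive t 1 V (2 * y t * (- lam * y t + w + u t 0 0) +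
    \sum_k 2 * tht t k 0 * (- (chi1 t * bet t k 0) - dz (tht t k 0 + th t k 0))).
  apply: is_derive_eq (is_deriveD (is_deriveX 2 (y_is_derive t0 tb))
    (is_derive_sum (fun k => is_deriveX 2 (tht_entry_is_derive k t0 tb)))) _.
  by rewrite /GRing.scale /=; under eq_bigr do rewrite expr1.
split; first by case: dV.
have u_sum : u t 0 0 = \sum_k bet t k 0 * tht t k 0.
  by rewrite /u mxE; apply: eq_bigr => k _; rewrite mxE.
have chi1E : chi1 t = y t - tau1 t by rewrite /chi1 /tau1 /y /eta !firstE mxE addrK.
rewrite derive_val u_sum chi1E adaptive_cross_term_cancel VE.
have y_part : - 2 * lam * y t ^+ 2 + 2 * y t * w <= - y t ^+ 2 + Bw ^+ 2.
  have /sqr_le_norm : `|w| <= Bw := w_le t t0 tb.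
  have := sqr_ge0 (y t - w).
  have : 0 <= (lam - 1) * y t ^+ 2 by rewrite mulr_ge0 ?subr_ge0 ?sqr_ge0.
  nra.
have := tht_le t t0 tb; lra.
Qed.

Lemma y_tht_bounded : exists M, forall t, 0 <= t -> (t%:E < b)%E ->
  `|y t| <= M /\ `|tht t| <= M.
Proof.
have [CV dV] := V_dissipation.
pose M := 1 + maxr 0 (maxr (V 0) (CV / 1)).
have M_ge0 : 0 <= M by rewrite addr_ge0 // le_max lexx.
have V_le t : 0 <= t -> (t%:E < b)%E -> V t <= M - 1.
  move=> t0 tb; rewrite /M addrC addKr le_max; apply/orP; right.
  exact: derive_decay_le_max ltr01 dV t t0 tb.
have tht_sum_ge0 t : 0 <= \sum_k tht t k 0 ^+ 2 by apply: sumr_ge0 => k _; exact: sqr_ge0.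
exists M => t t0 tb; have := V_le t t0 tb; rewrite VE => V_le_t; split.
  by apply: le_trans (normr_le1Dsqr _) _; have := tht_sum_ge0 t; lra.
apply: mx_norm_le_entries => // k j; rewrite (ord1 j).
apply: le_trans (normr_le1Dsqr _) _.
have := ler_sum_term k (fun i => sqr_ge0 (tht t i 0)); have := sqr_ge0 (y t); lra.
Qed.

Lemma closed_loop_bounded : exists M, forall t, 0 <= t -> (t%:E < b)%E -> `|x t| <= M.
Proof.
have [MX X_le] := X_bounded; have [Mze zeta_le] := zeta_bounded.
have [My y_tht_le] := y_tht_bounded.
have eta_le t : 0 <= t -> (t%:E < b)%E -> `|eta t| <= My * `|bvec bt| + Mze.
  move=> t0 tb; rewrite (cV_bvec_decomp bt (eta t)).
  apply: le_trans (ler_normD _ _) _; apply: lerD.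
    by rewrite normrZ ler_wpM2r // firstE; case: (y_tht_le t t0 tb).
  exact: le_trans (Mmat_norm_le _) (zeta_le t t0 tb).
exists (maxr (maxr Mz (My * `|bvec bt| + Mze + Mta)) (maxr My MX)) => t t0 tb.
have -> : x t = ((zf t, eta t - tau (zf t)), (tht t, Xf t)).
  by rewrite /eta addrK /zf /chi /tht /Xf; case: (x t) => [[? ?] [? ?]].
have [_ tht_le] := y_tht_le t t0 tb.
apply: prod_norm_le; apply: prod_norm_le => /=; rewrite !le_max.
- by rewrite z_bound.
- suff -> : `|eta t - tau (zf t)| <= My * `|bvec bt| + Mze + Mta by rewrite orbT.
  by apply: le_trans (ler_normB _ _) _; apply: lerD; [exact: eta_le | exact: tau_bound].
- by rewrite tht_le !orbT.
- by rewrite X_le ?orbT.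
Qed.

End ClosedLoopTrajectory.

Section Regularity.
Variable R : realType.

Lemma C1_continuous (V W : normedModType R) (f : V -> W) : C1 f -> continuous f.
Proof. by move=> [df _] x; apply: differentiable_continuous; exact: df. Qed.

Lemma continuous_comp_col_mx0 N (W : normedModType R) (h : 'cV[R]_(N + 1) -> W) :
  continuous h -> continuous (fun v => h (col_mx v 0)).
Proof. by move=> hc v; exact: (continuous_comp (@continuous_col_mx0 _ N 1 v) (hc _)). Qed.

End Regularity.

Theorem lemma1 (R : realType) (p sw n m q : nat)
  (s : 'cV[R]_p -> 'cV[R]_sw -> 'cV[R]_sw)
  (f0 : 'cV[R]_p -> 'cV[R]_sw -> 'cV[R]_n -> 'cV[R]_n)
  (f1 : 'cV[R]_p -> 'cV[R]_sw -> 'cV[R]_n -> R -> 'cV[R]_n)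
  (qq : 'cV[R]_p -> 'cV[R]_sw -> 'cV[R]_n -> R -> R)
  (P : set 'cV[R]_p) (W : set 'cV[R]_sw) (Z : set 'cV[R]_n)
  (* all functions C^1 *)
  (Hs : C1 (fun v : 'cV[R]_(p + sw) => s (usubmx v) (dsubmx v)))
  (Hf0 : C1 (fun v : 'cV[R]_(p + sw + n) => f0 (rho_of v) (w_of v) (z_of v)))
  (Hf1 : C1 (fun v : 'cV[R]_(p + sw + n + 1) =>
          f1 (rho_of (usubmx v)) (w_of (usubmx v)) (z_of (usubmx v)) (dsubmx v 0 0)))
  (Hq : C1 (fun v : 'cV[R]_(p + sw + n + 1) =>
          qq (rho_of (usubmx v)) (w_of (usubmx v)) (z_of (usubmx v)) (dsubmx v 0 0)))
  (cP : compact P) (cW : compact W) (cZ : compact Z) :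
  let Zb : set 'cV[R]_(p + sw + n) :=
    [set v | P (rho_of v) /\ W (w_of v) /\ Z (z_of v)] in
  let PW : set 'cV[R]_(p + sw) := [set v | P (usubmx v) /\ W (dsubmx v)] in
  let c : 'cV[R]_(p + sw + n) -> R :=
    fun v => - qq (rho_of v) (w_of v) (z_of v) 0 in
  let F0 := f0bold s f0 in
  (* Assumption (i) *)
  submanifold_wb PW ->
  invariant_set (fun v : 'cV[R]_(p + sw) => col_mx 0 (s (usubmx v) (dsubmx v))) PW ->
  (* Assumption (ii) *)
  forall Zc : set 'cV[R]_(p + sw + n),
  compact Zc -> (forall v, Zc v -> PW (usubmx v)) ->
  pos_orbit_in F0 Zb Zc ->
  submanifold_wb (omega_limit F0 Zb) ->
  (exists2 d1 : R, 0 < d1 & forall v, PW (usubmx v) ->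
      dist_le v (omega_limit F0 Zb) d1 -> Zb v) ->
  (* Assumption (iv) *)
  forall (tau : 'cV[R]_(p + sw + n) -> 'cV[R]_m.+1)
         (theta : 'cV[R]_p -> 'cV[R]_q)
         (phi : R -> 'cV[R]_m.+1) (Om : R -> 'M[R]_(m.+1, q)),
  (exists2 U : set 'cV[R]_(p + sw + n), open U /\ Zc `<=` U & C1_on U tau) ->
  {within P, continuous theta} ->
  C1 phi -> C1 Om ->
  (exists M : R, forall x : R, M < `|x| -> phi x = 0 /\ Om x = 0) ->
  (forall v, omega_limit F0 Zb v ->
     'd tau v (F0 v) = Ash R m *m tau v + phi (first (tau v))
                       + Om (first (tau v)) *m theta (rho_of v)
     /\ c v = first (tau v)) ->
  (* design quantities *)
  forall (bt : 'cV[R]_m),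
  (exists rs : seq (R[i]), [/\ size rs = m, uniq rs,
      all (root (map_poly (real_complex R) (bpoly bt))) rs &
      all (fun r => Re r < 0) rs]) ->
  forall (l : R) (dz : R -> R),
  C1 dz ->
  (forall x, `|x| <= l -> dz x = 0) ->
  (forall x, l + 1 <= `|x| -> dz x = x) ->
  (forall r, P r -> eucl (theta r) < l) ->
  exists lamstar : R, forall lam : R, lamstar <= lam -> 0 < lam ->
  forall (a b : \bar R) (x : R -> cl_state R p sw n m q),
    (a < 0 < b)%E ->
    is_solution (cl_field s f0 c tau theta phi Om bt lam dz) (open_itv a b) x ->
    Zb (x 0).1.1 ->
    exists M : R, forall t, 0 <= t -> (t%:E < b)%E -> `|x t| <= M.
Proof.
move=> Zb PW c F0 _ _ Zc cZc Zc_PW orbit _ _ tau theta phi Om [U [_ ZcU] tauC1]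
  thetaC phiC1 OmC1 [M0 supp] _ bt [rs [size_rs uniq_rs roots_rs Re_rs]]
  l dz dzC1 _ dz_id _.
have tau_diff v : Zc v -> differentiable tau v by move=> Zv; exact: tauC1.1 _ (ZcU _ Zv).
have [Mz [_ z_le]] := compact_continuous_bounded (f := id) cZc
  (continuous_subspaceT (fun v => cvg_id)).
have [Mta [_ tau_le]] : exists M, 0 <= M /\ forall v, Zc v -> `|tau v| <= M.
  apply: compact_continuous_bounded cZc _; apply/continuous_in_subspaceT => v /[1!inE] Zv.
  exact/differentiable_continuous/tau_diff.
have c_cont : continuous c.
  have := continuous_comp_col_mx0 (C1_continuous Hq).
  rewrite (_ : (fun v => _) = fun v => qq (rho_of v) (w_of v) (z_of v) 0).
    by move=> qq0_cont v; exact: continuousN (qq0_cont v).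
  by apply: funext => v; rewrite col_mxKu col_mxKd mxE.
have [Mc [_ c_le]] := compact_continuous_bounded cZc (continuous_subspaceT c_cont).
have [Mth [_ theta_le]] := compact_continuous_bounded cP thetaC.
have [Mph phi_le] := compact_support_bounded (C1_continuous phiC1)
  (fun y y_gt => (supp y y_gt).1).
have [MO Om_le] := compact_support_bounded (C1_continuous OmC1)
  (fun y y_gt => (supp y y_gt).2).
have [Mdz [_ dz_le]] := compact_continuous_bounded
  (segment_compact (a := - (`|l| + 1)) (b := `|l| + 1))
  (continuous_subspaceT (C1_continuous dzC1)).
exists 1 => lam lam_ge1 _ a b x ab x_sol x0.
have inZc : forall t, 0 <= t -> (t%:E < b)%E -> Zc (x t).1.1 :=
  orbit a b _ ab (z_solution x_sol) x0.
apply: (closed_loop_bounded ab x_sol (fun t t0 tb => tau_diff _ (inZc t t0 tb))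
  (fun t t0 tb => z_le _ (inZc t t0 tb)) (fun t t0 tb => tau_le _ (inZc t t0 tb))
  (fun t t0 tb => c_le _ (inZc t t0 tb)) _ phi_le Om_le dz_id _ lam_ge1
  size_rs uniq_rs roots_rs Re_rs).
- by move=> t t0 tb; exact/theta_le/(Zc_PW _ (inZc t t0 tb)).1.
- by move=> v v_le; apply: dz_le; rewrite /= in_itv /= -ler_norml.
Qed.
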